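(* Let $p,q$ be positive integers, $n=p+q$, and let $M$ be an $n\times n$ complex matrix with $M=M^*$ and $M^*I_{p,q}M=I_{p,q}$. If $\lambda\neq 0$ is an eigenvalue of $M+I_{p,q}$, then $|\lambda|\geq 2$.
   Context: $I_{p,q}=\mathrm{diag}\{I_p,-I_q\}$, where $I_p$ is the $p\times p$ identity matrix; $M^*$ denotes the conjugate transpose. *)

From mathcomp Require Import all_boot all_order all_algebra.
From mathcomp Require Import complex.
From mathcomp Require Import reals.
Set Implicit Arguments. Unset Strict Implicit. Unset Printing Implicit Defensive.
Import Order.TTheory GRing.Theory Num.Theory.
Local Open Scope ring_scope.

Definition ctrmx (C : numClosedFieldType) m n (M : 'M[C]_(m, n)) : 'M[C]_(n, m) :=
  map_mx (@Num.conj C) (M^T).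

Definition Ipq (C : nzRingType) (p q : nat) : 'M[C]_(p + q) :=
  block_mx 1%:M 0 0 (- 1%:M).

(* Put J = I_{p,q} and A = M + J.  Since M is hermitian, M J M = J, and with
   J^2 = 1 this gives A J A = 2 A.  For a row eigenvector v A = lambda v we
   have A v^* = lambda^* v^*, so evaluating v (A J A) v^* in two ways yields
   |lambda|^2 v J v^* = 2 lambda v v^*.  As |v J v^*| <= v v^* and
   v v^* > 0, this forces 2 |lambda| <= |lambda|^2. *)

From mathcomp Require Import all_boot all_order all_algebra.
From mathcomp Require Import complex reals.
Import Order.TTheory GRing.Theory Num.Theory.
Local Open Scope ring_scope.

Section ConjugateTranspose.
Variable C : numClosedFieldType.

Lemma ctrmxD {m n} (A B : 'M[C]_(m, n)) : ctrmx (A + B) = ctrmx A + ctrmx B.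
Proof. by rewrite /ctrmx linearD /= map_mxD. Qed.

Lemma ctrmxZ {m n} a (A : 'M[C]_(m, n)) : ctrmx (a *: A) = a^* *: ctrmx A.
Proof. by rewrite /ctrmx linearZ /= map_mxZ. Qed.

Lemma ctrmxM {m n k} (A : 'M[C]_(m, n)) (B : 'M[C]_(n, k)) :
  ctrmx (A *m B) = ctrmx B *m ctrmx A.
Proof. by rewrite /ctrmx trmx_mul map_mxM. Qed.

Lemma ctrmx_row_mx {m n1 n2} (A1 : 'M[C]_(m, n1)) (A2 : 'M[C]_(m, n2)) :
  ctrmx (row_mx A1 A2) = col_mx (ctrmx A1) (ctrmx A2).
Proof. by rewrite /ctrmx tr_row_mx map_col_mx. Qed.

Lemma ctrmx_block_mx {m1 m2 n1 n2} (Aul : 'M[C]_(m1, n1)) (Aur : 'M[C]_(m1, n2))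
    (Adl : 'M[C]_(m2, n1)) (Adr : 'M[C]_(m2, n2)) :
  ctrmx (block_mx Aul Aur Adl Adr) =
  block_mx (ctrmx Aul) (ctrmx Adl) (ctrmx Aur) (ctrmx Adr).
Proof. by rewrite /ctrmx tr_block_mx map_block_mx. Qed.

Lemma ctrmx_Ipq p q : ctrmx (Ipq C p q) = Ipq C p q.
Proof.
rewrite /Ipq ctrmx_block_mx /ctrmx !trmx0 !map_mx0 tr_scalar_mx.
by rewrite linearN /= tr_scalar_mx map_mxN !map_scalar_mx /= conjC1.
Qed.

Lemma mulmx_ctrmx_row {n} (v : 'rV[C]_n) :
  (v *m ctrmx v) 0 0 = \sum_j `|v 0 j| ^+ 2.
Proof. by rewrite mxE; apply: eq_bigr => j _; rewrite /ctrmx !mxE normCK. Qed.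

Lemma mulmx_ctrmx_ge0 {n} (v : 'rV[C]_n) : 0 <= (v *m ctrmx v) 0 0.
Proof. by rewrite mulmx_ctrmx_row sumr_ge0 // => j _; rewrite exprn_ge0. Qed.

Lemma mulmx_ctrmx_gt0 {n} (v : 'rV[C]_n) : v != 0 -> 0 < (v *m ctrmx v) 0 0.
Proof.
move=> v_neq0; rewrite lt_def mulmx_ctrmx_ge0 andbT mulmx_ctrmx_row.
rewrite psumr_eq0 => [|j _]; last by rewrite exprn_ge0.
apply: contra v_neq0 => /allP v_eq0; apply/eqP/matrixP => i j.
have /= := v_eq0 j (mem_index_enum j).
by rewrite sqrf_eq0 normr_eq0 ord1 mxE => /eqP.
Qed.

Lemma norm_Ipq_form_le p q (v : 'rV[C]_(p + q)) :
  `|(v *m Ipq C p q *m ctrmx v) 0 0| <= (v *m ctrmx v) 0 0.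
Proof.
rewrite -(hsubmxK v) /Ipq mul_row_block ctrmx_row_mx !mul_row_col.
rewrite !mulmx1 !mulmx0 addr0 add0r mulmxN mulmx1 mulNmx.
have a_ge0 := mulmx_ctrmx_ge0 (lsubmx v); have b_ge0 := mulmx_ctrmx_ge0 (rsubmx v).
set a := lsubmx v *m _ in a_ge0 *; set b := rsubmx v *m _ in b_ge0 *; clearbody a b.
by rewrite !mxE (le_trans (ler_normB _ _)) // !ger0_norm.
Qed.

Lemma eigenvalue_hermitian_sandwich_norm {n} (A J : 'M[C]_n) (c lambda : C) :
  ctrmx A = A ->
  (forall v : 'rV_n, `|(v *m J *m ctrmx v) 0 0| <= (v *m ctrmx v) 0 0) ->
  A *m J *m A = c *: A ->
  lambda != 0 -> eigenvalue A lambda ->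
  `|c| <= `|lambda|.
Proof.
move=> hermA J_contr AJA lambda_neq0 /eigenvalueP [v vA v_neq0].
have Av : A *m ctrmx v = lambda^* *: ctrmx v by rewrite -{1}hermA -ctrmxM vA ctrmxZ.
have lhs : v *m (A *m J *m A) *m ctrmx v = `|lambda| ^+ 2 *: (v *m J *m ctrmx v).
  by rewrite !mulmxA vA -!mulmxA Av -!scalemxAr -scalemxAl scalerA mulrC normCK.
have rhs : v *m (c *: A) *m ctrmx v = (c * lambda) *: (v *m ctrmx v).
  by rewrite -scalemxAr -scalemxAl vA -scalemxAl scalerA.
have two_ways : `|lambda| ^+ 2 * (v *m J *m ctrmx v) 0 0 =
                c * lambda * (v *m ctrmx v) 0 0.
  have := congr1 (fun X => (v *m X *m ctrmx v) 0 0) AJA.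
  by rewrite /= lhs rhs [in LHS]mxE [in RHS]mxE.
have vv_gt0 : 0 < (v *m ctrmx v) 0 0 by apply: mulmx_ctrmx_gt0.
have lambda_gt0 : 0 < `|lambda| by rewrite normr_gt0.
have : `|c| * `|lambda| * (v *m ctrmx v) 0 0 <= `|lambda| ^+ 2 * (v *m ctrmx v) 0 0.
  rewrite -[in X in X <= _](ger0_norm (ltW vv_gt0)) -!normrM -two_ways normrM normrX normr_id.
  by rewrite ler_wpM2l ?exprn_ge0.
by rewrite ler_pM2r // expr2 ler_pM2r.
Qed.

End ConjugateTranspose.

Lemma Ipq_mulmx_Ipq (R : nzRingType) p q : Ipq R p q *m Ipq R p q = 1%:M.
Proof.
rewrite /Ipq mulmx_block !mulmx0 !mul0mx !addr0 !add0r mulmx1 mulmxN mulmx1.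
by rewrite opprK -scalar_mx_block.
Qed.

Lemma sandwich_addmx_involution {R : pzRingType} {n} {M J : 'M[R]_n} :
  J *m J = 1%:M -> M *m J *m M = J ->
  (M + J) *m J *m (M + J) = 2%:R *: (M + J).
Proof.
move=> JJ MJM; rewrite mulmxDl !mulmxDr !mulmxDl -[M *m J *m J]mulmxA JJ.
by rewrite !mul1mx mulmx1 MJM scaler_nat mulr2n [J + M]addrC.
Qed.

Local Open Scope complex_scope.

Theorem corollary3p5 (R : realType) (p q : nat) (hp : (0 < p)%N) (hq : (0 < q)%N)
  (M : 'M[R[i]]_(p + q)) (lambda : R[i]) :
  ctrmx M = M ->
  ctrmx M *m Ipq R[i] p q *m M = Ipq R[i] p q ->
  lambda != 0 ->
  eigenvalue (M + Ipq R[i] p q) lambda ->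
  2 <= `|lambda|.
Proof.
move=> hermM unitaryM lambda_neq0 eig_lambda.
have herm_sum : ctrmx (M + Ipq R[i] p q) = M + Ipq R[i] p q.
  by rewrite ctrmxD hermM ctrmx_Ipq.
have MJM : M *m Ipq R[i] p q *m M = Ipq R[i] p q by rewrite -{1}hermM.
have sandwich := sandwich_addmx_involution (Ipq_mulmx_Ipq R[i] p q) MJM.
rewrite -[2](normr_nat R[i] 2).
exact: eigenvalue_hermitian_sandwich_norm herm_sum (@norm_Ipq_form_le _ p q)
  sandwich lambda_neq0 eig_lambda.
Qed.
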